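(* Let $q$ be even and $u\in\mathbf{SL}_n(q)$ unipotent of type $\lambda=(\lambda_1,\dots,\lambda_k)$, and assume $\lambda_i\ge\lambda_{i+1}\ge3$ for some $1\le i\le k-1$. Then the conjugacy class $\mathcal{O}_u$ in $\mathbf{SL}_n(q)$ is of type D.
   Context: Unipotent type $(\lambda_1\ge\dots\ge\lambda_k)$ = sizes of Jordan blocks. Conjugacy classes are racks with $x\triangleright y=xyx^{-1}$. A subrack $Y$ is decomposable if $Y=R\sqcup S$ with nonempty subracks $R,S$, $Y\triangleright R=R$, $Y\triangleright S=S$. Type D: a decomposable subrack $R\sqcup S$ with $r\in R,s\in S$ and $r\triangleright(s\triangleright(r\triangleright s))\neq s$. *)

From HB Require Import structures.
From mathcomp Require Import all_boot all_order all_algebra all_fingroup.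
Set Implicit Arguments. Unset Strict Implicit. Unset Printing Implicit Defensive.
Import GRing.Theory.
Local Open Scope ring_scope.

Section Defs.
Variables (F : finFieldType) (n : nat).

Definition SLset : {set 'M[F]_n} := [set A : 'M[F]_n | \det A == 1].

Definition rop (x y : 'M[F]_n) : 'M[F]_n := x *m y *m invmx x.

Definition conj_classSL (u : 'M[F]_n) : {set 'M[F]_n} :=
  [set rop g u | g in SLset].

Definition unipotent (u : 'M[F]_n) : Prop :=
  exists k : nat, iter k (mulmx (u - 1%:M)) 1%:M = 0.

(* unipotent Jordan matrix with consecutive diagonal blocks of sizes s
   (block boundaries at the partial sums of s) *)
Definition jordan_unip (s : seq nat) : 'M[F]_n :=
  \matrix_(i < n, j < n)
    ((nat_of_ord i == nat_of_ord j)
     || ((nat_of_ord j == (nat_of_ord i).+1) && (nat_of_ord j \notin scanl addn 0%N s)))%:R.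

Definition unip_type (u : 'M[F]_n) (lam : seq nat) : Prop :=
  [/\ sorted geq lam, all (fun m => 0 < m)%N lam, sumn lam = n
    & exists2 P : 'M[F]_n, P \in unitmx & u = P *m jordan_unip lam *m invmx P].

Definition subrack (Y : {set 'M[F]_n}) : Prop :=
  {in Y &, forall x y, rop x y \in Y}.

Definition act_set (Y R : {set 'M[F]_n}) : {set 'M[F]_n} :=
  [set rop y r | y in Y, r in R].

Definition decomposition (Y R S : {set 'M[F]_n}) : Prop :=
  subrack Y /\ subrack R /\ subrack S /\ R != set0 /\ S != set0 /\
  [disjoint R & S] /\ Y = R :|: S /\ act_set Y R = R /\ act_set Y S = S.

Definition typeD (O : {set 'M[F]_n}) : Prop :=
  exists Y R S : {set 'M[F]_n},
    [/\ Y \subset O, decomposition Y R S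
      & exists r s, [/\ r \in R, s \in S & rop r (rop s (rop r s)) != s]].

End Defs.

(* Conjugating by P we may assume that u is the Jordan matrix J of type
   lam.  Two consecutive parts of size >= 3 give an isolated block boundary
   p + 3 (the only one among p + 1, ..., p + 5).  Let Y be the set of elements
   of O that are upper unitriangular in the basis P, split according to the
   value (1 or 0) of the superdiagonal entry (p + 1, p + 2).  Since this entry
   is additive on products of unitriangular matrices, x |> y preserves it for
   x in Y, so Y = R u S is a decomposition.  The Jordan matrix J lies in R, and
   its conjugate s0 by the (even) 3-cycle (p+2 p+3 p+4) of the basis lies in S.
   Finally J s0 J s0 != s0 J s0 J, as one sees on the 4 x 4 window at the
   indices p, ..., p + 3; this is exactly r |> (s |> (r |> s)) != s.

   The argument
   works over every finite field. *)

From HB Require Import structures.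
From mathcomp Require Import all_boot all_order all_algebra all_fingroup.
From mathcomp Require Import zify.
Set Implicit Arguments. Unset Strict Implicit. Unset Printing Implicit Defensive.

Lemma foldl_addn c s : foldl addn c s = c + sumn s.
Proof. by elim: s c => [|x s IH] c /=; rewrite ?addn0 // IH addnA. Qed.

Lemma mem_scanl_addn c s y : y \in scanl addn c s -> c <= y <= c + sumn s.
Proof. by elim: s c => [|x s IH] c //=; rewrite inE => /orP[/eqP ->|/IH]; lia. Qed.

Definition isolated_boundary (lam : seq nat) (p : nat) : Prop :=
  p + 6 <= sumn lam /\
  forall y, p < y <= p + 5 -> (y \in scanl addn 0 lam) = (y == p + 3).

Lemma isolated_boundary_cat pre a b post : 3 <= a -> 3 <= b ->
  isolated_boundary (pre ++ a :: b :: post) (sumn pre + a - 3).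
Proof.
move=> ha hb; rewrite /isolated_boundary scanl_cat foldl_addn /= add0n sumn_cat /=.
split=> [|y hy]; first lia.
rewrite mem_cat !inE; apply/idP/eqP => [|->]; last by rewrite subnK ?eqxx ?orbT; lia.
case/orP=> [/mem_scanl_addn|/orP[/eqP|/orP[/eqP|/mem_scanl_addn]]]; lia.
Qed.

Lemma exists_isolated_boundary (lam : seq nat) i :
  i.+1 < size lam -> 3 <= nth 0 lam i -> 3 <= nth 0 lam i.+1 ->
  exists p, isolated_boundary lam p.
Proof.
move=> hi ha hb; have := isolated_boundary_cat (take i lam) (drop i.+2 lam) ha hb.
rewrite -(@drop_nth _ 0 i.+1) // -(@drop_nth _ 0 i) ?(ltn_trans _ hi) //.
by rewrite cat_take_drop; exists (sumn (take i lam) + nth 0 lam i - 3).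
Qed.

Definition cyc3 (p z : nat) : nat :=
  if z == p + 2 then p + 3 else if z == p + 3 then p + 4
  else if z == p + 4 then p + 2 else z.

Lemma cyc3_shift p k : cyc3 p (p + k) = p + cyc3 0 k.
Proof. by rewrite /cyc3 !eqn_add2l; do !case: ifP. Qed.

Lemma cyc3_inj p : injective (cyc3 p).
Proof. by move=> x y; rewrite /cyc3; do !case: eqP; lia. Qed.

Lemma cyc3_succ_descent p x y :
  y < x -> cyc3 p y = (cyc3 p x).+1 -> cyc3 p y = p + 3.
Proof. by rewrite /cyc3; do !case: eqP; lia. Qed.

(* Entry pattern of a unipotent Jordan matrix near a single block boundary b. *)
Definition jordan_cond (b x y : nat) : bool := (x == y) || (y == x.+1) && (y != b).

Import GRing.Theory.
Local Open Scope ring_scope.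

Section Unitriangular.
Variables (R : nzRingType) (n : nat).
Implicit Types A B : 'M[R]_n.

Definition unitri A : bool :=
  [forall i : 'I_n, forall j : 'I_n,
     ((j < i)%N ==> (A i j == 0)) && ((i == j) ==> (A i j == 1))].

Lemma unitriP A :
  reflect ((forall i j : 'I_n, (j < i)%N -> A i j = 0) /\ (forall i, A i i = 1))
          (unitri A).
Proof.
apply: (iffP forallP) => [H|[H0 H1] i]; last first.
  apply/forallP=> j; apply/andP; split; apply/implyP; first by move=> ?; rewrite H0.
  by move=> /eqP <-; rewrite H1.
split=> [i j lt|i].
  by have /forallP/(_ j)/andP[/implyP/(_ lt)/eqP] := H i.
by have /forallP/(_ i)/andP[_ /implyP/(_ (eqxx _))/eqP] := H i.
Qed.

Lemma unitri1 : unitri 1%:M.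
Proof.
apply/unitriP; split=> [i j lt|i]; rewrite mxE ?eqxx //.
by case: eqP => // ij; rewrite ij ltnn in lt.
Qed.

Lemma unitri_mul A B : unitri A -> unitri B -> unitri (A *m B).
Proof.
move=> /unitriP[A0 A1] /unitriP[B0 B1]; apply/unitriP; split=> [i j lt|i].
  rewrite !mxE big1 // => k _; case: (ltnP k i) => [ki|ik]; first by rewrite A0 ?mul0r.
  by rewrite B0 ?mulr0 // (leq_trans lt ik).
rewrite !mxE (bigD1 i) //= A1 B1 mulr1 big1 ?addr0 // => k ki.
case: (ltngtP k i) => [lt|lt|/val_inj e]; first by rewrite A0 ?mul0r.
  by rewrite B0 ?mulr0.
by rewrite e eqxx in ki.
Qed.

Lemma unitri_iter A k : unitri A -> unitri (iter k (mulmx A) 1%:M).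
Proof. by move=> uA; elim: k => [|k IH] /=; [exact: unitri1 | exact: unitri_mul]. Qed.

(* On the superdiagonal, the product of unitriangular matrices is additive:
   this is the invariant that separates the two halves of the decomposition. *)
Lemma unitri_mul_superdiag A B (c c' : 'I_n) : c' = c.+1 :> nat ->
  unitri A -> unitri B -> (A *m B) c c' = A c c' + B c c'.
Proof.
move=> cc' /unitriP[A0 A1] /unitriP[B0 B1].
have c'c : c' != c by apply/eqP => e; move: cc'; rewrite e; lia.
rewrite !mxE (bigD1 c) //= A1 mul1r (bigD1 c') //= B1 mulr1 big1 ?addr0 1?addrC //.
move=> k /andP[kc kc']; case: (ltnP k c) => [lt|le]; first by rewrite A0 ?mul0r.
rewrite B0 ?mulr0 //; move: kc kc' le; rewrite -!(inj_eq val_inj) /= cc'; lia.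
Qed.

Lemma window_index_proof p w (hpw : (p + w <= n)%N) (i : 'I_w) : (p + i < n)%N.
Proof. by apply: leq_trans hpw; rewrite ltn_add2l. Qed.

Definition window_index p w (hpw : (p + w <= n)%N) (i : 'I_w) : 'I_n :=
  Ordinal (window_index_proof hpw i).

Definition window p w (hpw : (p + w <= n)%N) A : 'M[R]_w :=
  \matrix_(i < w, j < w) A (window_index hpw i) (window_index hpw j).

(* A product of unitriangular matrices only mixes indices between the row and
   the column index, so taking windows commutes with products. *)
Lemma window_mul p w (hpw : (p + w <= n)%N) A B : unitri A -> unitri B ->
  window hpw (A *m B) = window hpw A *m window hpw B.
Proof.
move=> /unitriP[A0 _] /unitriP[B0 _]; apply/matrixP => i j; rewrite !mxE.
rewrite (bigID (fun k : 'I_n => k \in window_index hpw @: setT)) /=.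
rewrite [X in _ + X]big1 ?addr0 => [|k kw].
  rewrite big_imset /=; last by move=> x y _ _ /(congr1 val) /= /addnI /val_inj.
  by apply: eq_big => // k; rewrite ?inE ?mxE.
have : ~~ ((p <= k) && (k < p + w))%N.
  apply: contra kw => /andP[pk kw]; apply/imsetP.
  have kpw : (k - p < w)%N by lia.
  by exists (Ordinal kpw) => //; apply: val_inj => /=; lia.
rewrite negb_and -!ltnNge => /orP[kp|kp].
  by rewrite A0 ?mul0r //=; lia.
by rewrite B0 ?mulr0 //=; move: (ltn_ord j); lia.
Qed.

End Unitriangular.

Section FinitePowers.
Variables (R : finComUnitRingType) (n : nat).
Implicit Types A : 'M[R]_n.

(* Powers of a square matrix of arbitrary size (no ring structure needed). *)
Definition mxpow A k : 'M[R]_n := iter k (mulmx A) 1%:M.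

Lemma mxpowD A a b : mxpow A (a + b) = mxpow A a *m mxpow A b.
Proof. by elim: a => [|a IH] /=; rewrite ?mul1mx // /mxpow /= -/(mxpow A _) IH mulmxA. Qed.

Lemma mxpow_unit A k : A \in unitmx -> mxpow A k \in unitmx.
Proof. by move=> uA; elim: k => [|k IH] /=; rewrite ?unitmx1 // unitmx_mul uA. Qed.

(* In the finite monoid of matrices, the powers of A repeat; for a unit A this
   makes its inverse a power of A. *)
Lemma invmx_mxpow A : A \in unitmx -> exists k, invmx A = mxpow A k.
Proof.
move=> uA; have [a [b [ab eqab]]] : exists a b, (a < b)%N /\ mxpow A a = mxpow A b.
  pose f (k : 'I_#|{: 'M[R]_n}|.+1) := mxpow A k.
  have /injectivePn[x [y xy fxy]] : ~~ injectiveb f.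
    by apply/injectiveP => /leq_card; rewrite card_ord ltnn.
  case: (ltngtP x y) => [lt|lt|/val_inj exy]; [by exists x, y | by exists y, x |].
  by rewrite exy eqxx in xy.
have [d bE] : exists d, b = (a + d.+1)%N by exists (b - a).-1; lia.
have period : A *m mxpow A d = 1%:M.
  have := congr1 (mulmx (invmx (mxpow A a))) eqab.
  by rewrite bE mxpowD mulKmx ?mulVmx ?mxpow_unit // => ->.
by exists d; rewrite -[LHS]mulmx1 -period mulmxA mulVmx ?mul1mx.
Qed.

End FinitePowers.

Lemma invmxM (R : comUnitRingType) n (A B : 'M[R]_n) :
  A \in unitmx -> B \in unitmx -> invmx (A *m B) = invmx B *m invmx A.
Proof.
move=> uA uB; have uAB : A *m B \in unitmx by rewrite unitmx_mul uA uB.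
have rinv : A *m B *m (invmx B *m invmx A) = 1%:M by rewrite !mulmxA mulmxK ?mulmxV.
by rewrite -[LHS]mulmx1 -rinv mulmxA mulVmx ?mul1mx.
Qed.

Section ConjugacyClass.
Variables (F : finFieldType) (n : nat) (u : 'M[F]_n).
Hypothesis det_u : \det u = 1.
Local Notation O := (conj_classSL u).

Lemma unitmx_SL (g : 'M[F]_n) : \det g = 1 -> g \in unitmx.
Proof. by move=> dg; rewrite unitmxE dg unitr1. Qed.

Lemma mem_class_conj (g : 'M[F]_n) : \det g = 1 -> rop g u \in O.
Proof. by move=> dg; apply: imset_f; rewrite inE dg. Qed.

Lemma mem_class_self : u \in O.
Proof. by have := @mem_class_conj 1%:M (det1 _ _); rewrite /rop mul1mx invmx1 mulmx1. Qed.

Lemma class_det x : x \in O -> \det x = 1.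
Proof.
case/imsetP=> g; rewrite inE => /eqP dg ->.
by rewrite /rop !det_mulmx det_inv dg det_u !mul1r invr1.
Qed.

Lemma class_unit x : x \in O -> x \in unitmx.
Proof. by move/class_det/unitmx_SL. Qed.

Lemma class_rop x y : x \in O -> y \in O -> rop x y \in O.
Proof.
move=> xO /imsetP[h]; rewrite inE => /eqP dh ->.
have ux := class_unit xO; have uh := unitmx_SL dh.
apply/imsetP; exists (x *m h); first by rewrite inE det_mulmx (class_det xO) dh mulr1.
by rewrite /rop invmxM // !mulmxA.
Qed.

End ConjugacyClass.

Lemma rop_braid (F : finFieldType) n (r s : 'M[F]_n) :
  r \in unitmx -> s \in unitmx ->
  (rop r (rop s (rop r s)) == s) = (r *m s *m r *m s == s *m r *m s *m r).
Proof.
move=> ur us; rewrite /rop.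
apply/eqP/eqP => [e|e]; last by rewrite !mulmxA e !mulmxK.
by have := congr1 (fun M => M *m r *m s *m r) e; rewrite /= !mulmxA !mulmxKV.
Qed.

Section Slices.
Variables (F : finFieldType) (n : nat) (u P : 'M[F]_n) (c c' : 'I_n).
Hypotheses (det_u : \det u = 1) (unit_P : P \in unitmx) (cc' : c' = c.+1 :> nat).
Local Notation O := (conj_classSL u).

Definition base_change (x : 'M[F]_n) : 'M[F]_n := invmx P *m x *m P.

Lemma base_changeM x y : base_change (x *m y) = base_change x *m base_change y.
Proof. by rewrite /base_change !mulmxA mulmxK. Qed.

Lemma base_change_unit x : x \in unitmx -> base_change x \in unitmx.
Proof. by move=> ux; rewrite !unitmx_mul unitmx_inv unit_P ux. Qed.

Definition slice (b : F) : {set 'M[F]_n} :=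
  [set x in O | unitri (base_change x) && (base_change x c c' == b)].

Lemma slice_class b x : x \in slice b -> (x \in O) && unitri (base_change x).
Proof. by rewrite inE => /and3P[-> ->]. Qed.

(* Conjugating by an element that is unitriangular in the basis P keeps the
   (c, c') entry, by additivity of the superdiagonal. *)
Lemma slice_rop b x y :
  x \in O -> unitri (base_change x) -> y \in slice b -> rop x y \in slice b.
Proof.
move=> xO ux; rewrite !inE => /and3P[yO uy /eqP yb].
have unit_x := class_unit det_u xO.
have comm : base_change (rop x y) *m base_change x = base_change x *m base_change y.
  by rewrite -!base_changeM /rop mulmxKV.
have uxy : unitri (base_change (rop x y)).
  rewrite -(mulmxK (base_change_unit unit_x) (base_change (rop x y))) comm.
  have [k ->] := invmx_mxpow (base_change_unit unit_x).
  by apply: unitri_mul; [apply: unitri_mul | apply: unitri_iter].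
rewrite (class_rop det_u xO yO) uxy /=; apply/eqP.
have := congr1 (fun M : 'M[F]_n => M c c') comm.
rewrite (unitri_mul_superdiag cc' uxy ux) (unitri_mul_superdiag cc' ux uy) yb.
by rewrite [_ + b]addrC; apply: addIr.
Qed.

Local Notation Y := (slice 1 :|: slice 0).

Lemma slice_closed b x y : x \in Y -> y \in slice b -> rop x y \in slice b.
Proof. by rewrite inE => /orP[] /slice_class /andP[xO ux]; apply: slice_rop. Qed.

Lemma act_slice b : slice b \subset Y -> act_set Y (slice b) = slice b.
Proof.
move=> sub; apply/setP => z; apply/imset2P/idP => [[x y xY yb ->]|zb].
  exact: slice_closed.
exists z z => //; first exact: (subsetP sub).
have /andP[zO _] := slice_class zb.
by rewrite /rop mulmxK // (class_unit det_u zO).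
Qed.

Lemma slice_decomposition r s :
  r \in slice 1 -> s \in slice 0 -> decomposition Y (slice 1) (slice 0).
Proof.
move=> r1 s0; have sub1 := subsetUl (slice 1) (slice 0).
have sub0 := subsetUr (slice 1) (slice 0).
split; [|split; [|split; [|split; [|split; [|split; [|split; [|split]]]]]]] => //.
- move=> x y xY; rewrite inE => /orP[] y_in; rewrite inE; apply/orP;
    [left | right]; exact: slice_closed.
- by move=> x y x1 y1; apply: slice_closed => //; apply: (subsetP sub1).
- by move=> x y x0 y0; apply: slice_closed => //; apply: (subsetP sub0).
- by apply/set0Pn; exists r.
- by apply/set0Pn; exists s.
- rewrite -setI_eq0; apply/eqP/setP => x; rewrite !inE.
  apply/negbTE/negP => /andP[/and3P[_ _ /eqP ->] /and3P[_ _ /eqP]].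
  by apply/eqP; rewrite oner_eq0.
- exact: act_slice.
- exact: act_slice.
Qed.

End Slices.

Section TypeDCriterion.
Variables (F : finFieldType) (n : nat).

Lemma base_change_conj (P x : 'M[F]_n) : P \in unitmx ->
  base_change P (P *m x *m invmx P) = x.
Proof. by move=> uP; rewrite /base_change !mulmxA mulVmx // mul1mx mulmxKV. Qed.

Lemma typeD_of_slices (u P J s0 g0 : 'M[F]_n) (c c' : 'I_n) :
  \det u = 1 -> P \in unitmx -> u = P *m J *m invmx P -> c' = c.+1 :> nat ->
  \det g0 = 1 -> s0 = g0 *m J *m invmx g0 ->
  unitri J -> unitri s0 -> J c c' = 1 -> s0 c c' = 0 ->
  J *m s0 *m J *m s0 != s0 *m J *m s0 *m J -> typeD (conj_classSL u).
Proof.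
move=> det_u uP uJ cc' det_g0 s0J triJ tris0 Jcc' s0cc' noncomm.
pose s := P *m s0 *m invmx P.
have bc_u : base_change P u = J by rewrite uJ base_change_conj.
have bc_s : base_change P s = s0 by rewrite base_change_conj.
have ug0 := unitmx_SL det_g0.
have sO : s \in conj_classSL u.
  have -> : s = rop (P *m g0 *m invmx P) u.
    rewrite /rop /s s0J uJ !invmxM ?unitmx_mul ?unitmx_inv ?uP ?ug0 // invmxK.
    by rewrite !mulmxA !mulmxKV // !mulmxK.
  by apply: mem_class_conj; rewrite !det_mulmx det_inv det_g0 mulr1 mulrV -?unitmxE.
have uO := mem_class_self u.
have u1 : u \in slice u P c c' 1 by rewrite !inE uO bc_u triJ Jcc' eqxx.
have s0' : s \in slice u P c c' 0 by rewrite !inE sO bc_s tris0 s0cc' eqxx.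
exists (slice u P c c' 1 :|: slice u P c c' 0), (slice u P c c' 1), (slice u P c c' 0).
split.
- by apply/subsetP => x; rewrite inE => /orP[] /slice_class /andP[].
- exact: slice_decomposition u1 s0'.
exists u, s; split=> //.
rewrite rop_braid ?(class_unit det_u uO) ?(class_unit det_u sO) //.
apply: contra noncomm => /eqP braid.
by rewrite -bc_u -bc_s -!base_changeM // braid.
Qed.

End TypeDCriterion.

Lemma perm_mx_conj (R : comUnitRingType) n (t : 'S_n) (A : 'M[R]_n) :
  perm_mx t *m A *m invmx (perm_mx t) = \matrix_(i, j) A (t i) (t j).
Proof.
have -> : invmx (perm_mx t : 'M[R]_n) = perm_mx t^-1.
  have tV : perm_mx t *m perm_mx t^-1 = 1%:M :> 'M[R]_n.
    by rewrite -perm_mxM mulgV perm_mx1.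
  by rewrite -[LHS]mulmx1 -tV mulmxA mulVmx ?unitmx_perm // mul1mx.
by rewrite -row_permE -col_permE; apply/matrixP => i j; rewrite !mxE.
Qed.

Section FourByFour.
Variable R : nzRingType.

(* The windows of width 4 at p of the Jordan matrix and of its conjugate s0 by
   cyc3: Jw = 1 + E01 + E12 and Sw = 1 + E01 + E23. *)
Definition Jw : 'M[R]_4 := \matrix_(a < 4, b < 4) (jordan_cond 3 a b)%:R.
Definition Sw : 'M[R]_4 := \matrix_(a < 4, b < 4) (jordan_cond 3 (cyc3 0 a) (cyc3 0 b))%:R.

(* Row vectors of length 4, to compute the first row of products step by step. *)
Definition row4 (a b c d : R) : 'rV[R]_4 := \row_(j < 4) [:: a; b; c; d]`_j.

Lemma row4_mulJw a b c d : row4 a b c d *m Jw = row4 a (a + b) (b + c) d.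
Proof.
apply/rowP => j; rewrite !mxE !big_ord_recr big_ord0 /= !mxE.
by case: j => [[|[|[|[|]]]] ?] //=; rewrite !(mulr1, mulr0, add0r, addr0).
Qed.

Lemma row4_mulSw a b c d : row4 a b c d *m Sw = row4 a (a + b) c (c + d).
Proof.
apply/rowP => j; rewrite !mxE !big_ord_recr big_ord0 /= !mxE.
by case: j => [[|[|[|[|]]]] ?] //=; rewrite !(mulr1, mulr0, add0r, addr0).
Qed.

Lemma row0_Jw : row 0 Jw = row4 1 1 0 0.
Proof. by apply/rowP => j; rewrite !mxE; case: j => [[|[|[|[|]]]] ?]. Qed.

Lemma row0_Sw : row 0 Sw = row4 1 1 0 0.
Proof. by apply/rowP => j; rewrite !mxE; case: j => [[|[|[|[|]]]] ?]. Qed.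

(* Counting paths from 0 to 3: (Jw Sw Jw Sw) 0 3 = 2 but (Sw Jw Sw Jw) 0 3 = 1. *)
Lemma window_noncomm : (Jw *m Sw *m Jw *m Sw) 0 3 != (Sw *m Jw *m Sw *m Jw) 0 3.
Proof.
have entry (M : 'M[R]_4) : M 0 3 = row 0 M 0 3 by rewrite mxE.
rewrite 2!entry !row_mul row0_Jw row0_Sw !(row4_mulJw, row4_mulSw) !mxE /=.
by rewrite !(addr0, add0r) -subr_eq0 addrK oner_eq0.
Qed.

End FourByFour.

Lemma val_tperm n (x y z : 'I_n) :
  val (tperm x y z) = if val z == val x then val y else if val z == val y then val x else val z.
Proof.
case: tpermP => [->|->|zx zy]; rewrite !(inj_eq val_inj) ?eqxx //.
  by case: eqP => [->|].
by rewrite (introF eqP zx) (introF eqP zy).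
Qed.

Section Witness.
Variables (F : finFieldType) (n : nat) (lam : seq nat) (p : nat).
Hypotheses (sum_lam : sumn lam = n) (iso : isolated_boundary lam p).
Local Notation J := (jordan_unip F n lam).

Lemma room : (p + 4 < n)%N.
Proof. by case: iso; rewrite sum_lam; lia. Qed.

Lemma jordan_entry_near (i j : 'I_n) a b : (b <= 4)%N ->
  i = (p + a)%N :> nat -> j = (p + b)%N :> nat -> J i j = (jordan_cond 3 a b)%:R.
Proof.
move=> b4 ei ej; rewrite mxE ei ej /jordan_cond eqn_add2l -addnS eqn_add2l.
case: (boolP (b == a.+1)) => //= /eqP ba.
by rewrite iso.2 ?eqn_add2l //; lia.
Qed.

Lemma near_proof k : (k <= 4)%N -> (p + k < n)%N.
Proof. by move=> k4; apply: leq_ltn_trans room; rewrite leq_add2l. Qed.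

Definition near k (k4 : (k <= 4)%N) : 'I_n := Ordinal (near_proof k4).

Lemma near_val k (k4 : (k <= 4)%N) : val (near k4) = (p + k)%N.
Proof. by []. Qed.

Definition cyc3_perm : 'S_n :=
  (tperm (near (isT : 2 <= 4)%N) (near (isT : 3 <= 4)%N)
   * tperm (near (isT : 2 <= 4)%N) (near (isT : 4 <= 4)%N))%g.

Lemma cyc3_permE z : cyc3_perm z = cyc3 p z :> nat.
Proof.
rewrite permM !val_tperm !near_val /cyc3 /=; move: (nat_of_ord z) => v.
case: (eqVneq v (p + 2)) => [_|v2]; first by rewrite !eqn_add2l.
case: (eqVneq v (p + 3)) => [_|v3]; first by rewrite !eqn_add2l.
by case: (eqVneq v (p + 4)); rewrite (negbTE v2).
Qed.

Lemma det_cyc3_perm : \det (perm_mx cyc3_perm : 'M[F]_n) = 1.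
Proof.
rewrite det_perm odd_permM !odd_tperm -!(inj_eq val_inj) !near_val !eqn_add2l.
by rewrite expr0.
Qed.

Lemma unitri_jordan : unitri J.
Proof.
apply/unitriP; split=> [i j ji|i]; rewrite mxE ?eqxx //.
by rewrite (gtn_eqF ji) (ltn_eqF (leqW ji)).
Qed.

Definition s0 : 'M[F]_n := \matrix_(i, j) J (cyc3_perm i) (cyc3_perm j).

Lemma s0_conj : s0 = perm_mx cyc3_perm *m J *m invmx (perm_mx cyc3_perm).
Proof. by rewrite perm_mx_conj. Qed.

Lemma unitri_s0 : unitri s0.
Proof.
apply/unitriP; split=> [i j ji|i]; rewrite !mxE ?eqxx // !cyc3_permE.
case: eqP => [/cyc3_inj ij|_]; first by rewrite ij ltnn in ji.
case: eqP => //= /(cyc3_succ_descent ji) ->.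
by rewrite iso.2 ?eqxx //; lia.
Qed.

Lemma window_room : (p + 4 <= n)%N.
Proof. exact: ltnW room. Qed.

Lemma window_jordan : window window_room J = Jw F.
Proof.
apply/matrixP => a b; rewrite [LHS]mxE [RHS]mxE; apply: jordan_entry_near => //.
exact: ltnW.
Qed.

Lemma window_s0 : window window_room s0 = Sw F.
Proof.
apply/matrixP => a b; rewrite [LHS]mxE [LHS]mxE [RHS]mxE.
apply: jordan_entry_near; last 2 first.
- by rewrite cyc3_permE cyc3_shift.
- by rewrite cyc3_permE cyc3_shift.
by case: b => [[|[|[|[|]]]] ?].
Qed.

(* J and s0 satisfy J s0 J s0 != s0 J s0 J: compare the windows at p. *)
Lemma jordan_s0_noncomm : J *m s0 *m J *m s0 != s0 *m J *m s0 *m J.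
Proof.
have uJ := unitri_jordan; have us := unitri_s0.
have uJs := unitri_mul uJ us; have usJ := unitri_mul us uJ.
have uJsJ := unitri_mul uJs uJ; have usJs := unitri_mul usJ us.
apply: contra (window_noncomm F) => /eqP /(congr1 (window window_room)).
rewrite (window_mul _ uJsJ us) (window_mul _ uJs uJ) (window_mul _ uJ us).
rewrite (window_mul _ usJs uJ) (window_mul _ usJ us) (window_mul _ us uJ).
by rewrite window_jordan window_s0 => ->.
Qed.

Lemma jordan_typeD (u P : 'M[F]_n) :
  \det u = 1 -> P \in unitmx -> u = P *m J *m invmx P -> typeD (conj_classSL u).
Proof.
move=> det_u uP uJ.
pose c := window_index window_room (1 : 'I_4).
pose c' := window_index window_room (2 : 'I_4).
apply: (typeD_of_slices (c := c) (c' := c') det_u uP uJ _ det_cyc3_perm s0_conj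
          unitri_jordan unitri_s0 _ _ jordan_s0_noncomm).
- by rewrite /= -addnS.
- by rewrite (jordan_entry_near (a := 1) (b := 2)).
- rewrite [LHS]mxE (jordan_entry_near (a := 1) (b := 3)) //.
  + by rewrite cyc3_permE (cyc3_shift p 1).
  + by rewrite cyc3_permE (cyc3_shift p 2).
Qed.

End Witness.

Unset Implicit Arguments.

Theorem mainTheorem12 (F : finFieldType) (n : nat) (u : 'M[F]_n) (lam : seq nat) :
  ~~ odd #|F| ->
  \det u = 1 ->
  unipotent u ->
  unip_type u lam ->
  (exists i : nat, [/\ (i.+1 < size lam)%N,
                       (nth 0 lam i.+1 <= nth 0 lam i)%N
                     & (3 <= nth 0 lam i.+1)%N]) ->
  typeD (conj_classSL u).
Proof.
move=> _ det_u _ [_ _ sum_lam [P unit_P uJ]] [i [size_i le_i lam3]].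
have [p iso] := exists_isolated_boundary size_i (leq_trans lam3 le_i) lam3.
exact: (jordan_typeD sum_lam iso det_u unit_P uJ).
Qed.
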